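(* Consider $\mathbb{R}^4$ with coordinates $(u_1,u_2,p_{u_1},p_{u_2})$ and the Poisson bracket $$\{u_1,u_2\}=0,\quad \{p_{u_1},p_{u_2}\}=0,\quad \{u_i,p_{u_j}\}=\delta_{ij}\,u_i .$$ On the open set where $u_1u_2\neq0$, $u_1\neq u_2$ and $p_{u_1}u_2\neq p_{u_2}u_1$, define $$a=\frac{p_{u_1}^2}{u_1-u_2}+\frac{p_{u_2}^2}{u_2-u_1}-u_1^2-u_1u_2-u_2^2,\qquad b=\frac{u_2p_{u_1}^2}{u_2-u_1}+\frac{u_1p_{u_2}^2}{u_1-u_2}+(u_1+u_2)u_1u_2,$$ $$b_1=\frac{p_{u_1}u_2-p_{u_2}u_1}{u_1u_2(u_1-u_2)},\qquad b_0=-\frac{p_{u_1}u_2^2-p_{u_2}u_1^2}{u_1u_2(u_1-u_2)},$$ so that the parabola $y=x(b_1x+b_0)$ passes through $(u_1,p_{u_1})$ and $(u_2,p_{u_2})$. Then the quartic polynomial $x^3+ax+b-x^2(b_1x+b_0)^2$ is divisible by $(x-u_1)(x-u_2)$; let $v_1,v_2$ be the roots of the quadratic quotient. On an open subset $W$ where $v_1,v_2$ are real and distinct and can be chosen as smooth functions, define $$p_{v_j}=-v_j\,(b_1v_j+b_0),\qquad j=1,2,$$ and the map $\rho:(u_1,u_2,p_{u_1},p_{u_2})\mapsto(v_1,v_2,p_{v_1},p_{v_2})$. Then: (i) $\rho$ preserves the functions $a$ and $b$, i.e. $a\circ\rho=a$ and $b\circ\rho=b$ on $W$; (ii) $\rho$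 preserves the Poisson bracket above: $\{v_1,v_2\}=0$, $\{p_{v_1},p_{v_2}\}=0$, $\{v_i,p_{v_j}\}=\delta_{ij}\,v_i$.
   Context: For the bracket $\{u_i,p_{u_j}\}=\delta_{ij}u_i$ one has $\{f,g\}=\sum_{i=1}^2 u_i\left(\frac{\partial f}{\partial u_i}\frac{\partial g}{\partial p_{u_i}}-\frac{\partial f}{\partial p_{u_i}}\frac{\partial g}{\partial u_i}\right)$. The functions $a,b$ are in involution with respect to this bracket; they are the unique functions with $p_{u_i}^2=u_i^3+au_i+b$, $i=1,2$. *)

From Stdlib Require Import Reals.
Open Scope R_scope.

(* Functions on R^4 with coordinates (u1, u2, p1, p2) = (u_1, u_2, p_{u_1}, p_{u_2}). *)
Definition F4 := R -> R -> R -> R -> R.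
Definition Set4 := R -> R -> R -> R -> Prop.

Definition D1 (f : F4) x1 x2 x3 x4 l := derivable_pt_lim (fun t => f t x2 x3 x4) x1 l.
Definition D2 (f : F4) x1 x2 x3 x4 l := derivable_pt_lim (fun t => f x1 t x3 x4) x2 l.
Definition D3 (f : F4) x1 x2 x3 x4 l := derivable_pt_lim (fun t => f x1 x2 t x4) x3 l.
Definition D4 (f : F4) x1 x2 x3 x4 l := derivable_pt_lim (fun t => f x1 x2 x3 t) x4 l.

Definition has_partials (f : F4) x1 x2 x3 x4 : Prop :=
  (exists l, D1 f x1 x2 x3 x4 l) /\ (exists l, D2 f x1 x2 x3 x4 l) /\
  (exists l, D3 f x1 x2 x3 x4 l) /\ (exists l, D4 f x1 x2 x3 x4 l).

(* The bracket {f,g} = sum_i u_i (df/du_i dg/dp_i - df/dp_i dg/du_i), i.e. the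
   bracket with {u_i,p_{u_j}} = delta_ij u_i, {u_1,u_2} = {p_1,p_2} = 0,
   has value [val] at the point (x1,x2,x3,x4). *)
Definition bracket_value (f g : F4) x1 x2 x3 x4 (val : R) : Prop :=
  forall f1 f2 f3 f4 g1 g2 g3 g4,
    D1 f x1 x2 x3 x4 f1 -> D2 f x1 x2 x3 x4 f2 ->
    D3 f x1 x2 x3 x4 f3 -> D4 f x1 x2 x3 x4 f4 ->
    D1 g x1 x2 x3 x4 g1 -> D2 g x1 x2 x3 x4 g2 ->
    D3 g x1 x2 x3 x4 g3 -> D4 g x1 x2 x3 x4 g4 ->
    val = x1 * (f1 * g3 - f3 * g1) + x2 * (f2 * g4 - f4 * g2).

Definition PB_eq (f g h : F4) (W : Set4) : Prop :=
  forall x1 x2 x3 x4, W x1 x2 x3 x4 ->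
    has_partials f x1 x2 x3 x4 /\ has_partials g x1 x2 x3 x4 /\
    bracket_value f g x1 x2 x3 x4 (h x1 x2 x3 x4).

Definition cu1 : F4 := fun u1 u2 p1 p2 => u1.
Definition cu2 : F4 := fun u1 u2 p1 p2 => u2.
Definition czero : F4 := fun _ _ _ _ => 0.

Definition open4 (W : Set4) : Prop :=
  forall x1 x2 x3 x4, W x1 x2 x3 x4 ->
    exists eps, 0 < eps /\ forall y1 y2 y3 y4,
      Rabs (y1 - x1) < eps -> Rabs (y2 - x2) < eps ->
      Rabs (y3 - x3) < eps -> Rabs (y4 - x4) < eps -> W y1 y2 y3 y4.

Definition continuous_on4 (f : F4) (W : Set4) : Prop :=
  forall x1 x2 x3 x4, W x1 x2 x3 x4 ->
    forall eps, 0 < eps -> exists delta, 0 < delta /\ forall y1 y2 y3 y4,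
      Rabs (y1 - x1) < delta -> Rabs (y2 - x2) < delta ->
      Rabs (y3 - x3) < delta -> Rabs (y4 - x4) < delta ->
      Rabs (f y1 y2 y3 y4 - f x1 x2 x3 x4) < eps.

Definition dom (u1 u2 p1 p2 : R) : Prop :=
  u1 * u2 <> 0 /\ u1 <> u2 /\ p1 * u2 <> p2 * u1.

Definition fa : F4 := fun u1 u2 p1 p2 =>
  p1 ^ 2 / (u1 - u2) + p2 ^ 2 / (u2 - u1) - u1 ^ 2 - u1 * u2 - u2 ^ 2.
Definition fb : F4 := fun u1 u2 p1 p2 =>
  u2 * p1 ^ 2 / (u2 - u1) + u1 * p2 ^ 2 / (u1 - u2) + (u1 + u2) * u1 * u2.
Definition fb1 : F4 := fun u1 u2 p1 p2 =>
  (p1 * u2 - p2 * u1) / (u1 * u2 * (u1 - u2)).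
Definition fb0 : F4 := fun u1 u2 p1 p2 =>
  - ((p1 * u2 ^ 2 - p2 * u1 ^ 2) / (u1 * u2 * (u1 - u2))).

Definition quartic (u1 u2 p1 p2 x : R) : R :=
  x ^ 3 + fa u1 u2 p1 p2 * x + fb u1 u2 p1 p2
  - x ^ 2 * (fb1 u1 u2 p1 p2 * x + fb0 u1 u2 p1 p2) ^ 2.

From Stdlib Require Import Reals Lra.
From Coquelicot Require Import Coquelicot.
Open Scope R_scope.

(* (i) The parabola y = x (b1 x + b0) meets the curve y^2 = x^3 + a x + b at
   u1, u2, and the quartic is the equation of this intersection; at its other
   two roots v1, v2 the points (v_j, -p_{v_j}), hence also (v_j, p_{v_j}), lie
   on the same curve, and a, b are determined by any two points of it.
   (ii) Put S = v1 + v2 and P = v1 v2, rational functions of (u1, u2, b1, b0).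
   In the coordinates (S, P, b1, b0) the bracket is {S, b0} = -1, {P, b1} = 1,
   {P, b0} = -S, all other brackets vanishing.  Implicit differentiation of
   v^2 - S v + P = 0 expresses dv_j and dp_{v_j} in the frame
   (dS, dP, db1, db0), and the brackets of v_j, p_{v_j} follow by bilinearity. *)

Ltac nonzero :=
  repeat first [ apply Rmult_integral_contrapositive_currified
               | apply Rinv_neq_0_compat | apply pow_nonzero ];
  try lra; auto.

Lemma dom_nonzero u1 u2 p1 p2 : dom u1 u2 p1 p2 ->
  u1 <> 0 /\ u2 <> 0 /\ u1 - u2 <> 0 /\ p1 * u2 - p2 * u1 <> 0.
Proof.
  intros (Hu & Hne & Hp); repeat split; try lra;
    intro H0; apply Hu; rewrite H0; ring.
Qed.

Lemma fb1_neq0 u1 u2 p1 p2 : dom u1 u2 p1 p2 -> fb1 u1 u2 p1 p2 <> 0.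
Proof.
  intro Hd; apply dom_nonzero in Hd as (? & ? & ? & ?).
  unfold fb1, Rdiv; nonzero.
Qed.

Definition roots_sum : F4 := fun u1 u2 p1 p2 =>
  1 / fb1 u1 u2 p1 p2 ^ 2 - 2 * fb0 u1 u2 p1 p2 / fb1 u1 u2 p1 p2 - u1 - u2.

Definition roots_prod : F4 := fun u1 u2 p1 p2 =>
  u1 ^ 2 + u1 * u2 + u2 ^ 2 + 2 * fb0 u1 u2 p1 p2 * (u1 + u2) / fb1 u1 u2 p1 p2
  + fb0 u1 u2 p1 p2 ^ 2 / fb1 u1 u2 p1 p2 ^ 2 - (u1 + u2) / fb1 u1 u2 p1 p2 ^ 2.

Lemma quartic_factor u1 u2 p1 p2 x : dom u1 u2 p1 p2 ->
  quartic u1 u2 p1 p2 x = (x - u1) * (x - u2) *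
    (- fb1 u1 u2 p1 p2 ^ 2 * (x ^ 2 - roots_sum u1 u2 p1 p2 * x + roots_prod u1 u2 p1 p2)).
Proof.
  intro Hd; apply dom_nonzero in Hd as (? & ? & ? & ?).
  unfold quartic, roots_sum, roots_prod, fa, fb, fb1, fb0.
  field; repeat split; nonzero.
Qed.

Lemma poly3_eq0 c3 c2 c1 c0 :
  (forall x, c3 * x ^ 3 + c2 * x ^ 2 + c1 * x + c0 = 0) ->
  c3 = 0 /\ c2 = 0 /\ c1 = 0 /\ c0 = 0.
Proof.
  intro H; pose proof (H 0); pose proof (H 1); pose proof (H (-1)); pose proof (H 2).
  simpl in *; lra.
Qed.

Lemma linear_factor_eq0 a b c d :
  (forall x, (x - a) * (x - b) * (c * x + d) = 0) -> c = 0 /\ d = 0.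
Proof.
  intro H.
  destruct (poly3_eq0 c (d - c * (a + b)) (c * a * b - d * (a + b)) (d * a * b))
    as (Hc & Hd & _); [intro x; rewrite <- (H x); ring |].
  rewrite Hc in Hd; lra.
Qed.

Lemma roots_vieta u1 u2 p1 p2 v1 v2 : dom u1 u2 p1 p2 ->
  (forall x, quartic u1 u2 p1 p2 x =
     (x - u1) * (x - u2) * (- fb1 u1 u2 p1 p2 ^ 2 * (x - v1) * (x - v2))) ->
  v1 + v2 = roots_sum u1 u2 p1 p2 /\ v1 * v2 = roots_prod u1 u2 p1 p2.
Proof.
  intros Hd Hq.
  assert (Hb : - fb1 u1 u2 p1 p2 ^ 2 <> 0)
    by (apply Ropp_neq_0_compat, pow_nonzero, fb1_neq0, Hd).
  enough (Hlin : forall x, (x - u1) * (x - u2) *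
     ((v1 + v2 - roots_sum u1 u2 p1 p2) * x + (roots_prod u1 u2 p1 p2 - v1 * v2)) = 0)
    by (apply linear_factor_eq0 in Hlin; lra).
  intro x; apply (Rmult_eq_reg_l (- fb1 u1 u2 p1 p2 ^ 2)); [| exact Hb].
  pose proof (quartic_factor u1 u2 p1 p2 x Hd) as Hf; rewrite Hq in Hf.
  transitivity ((x - u1) * (x - u2) * (- fb1 u1 u2 p1 p2 ^ 2 *
      (x ^ 2 - roots_sum u1 u2 p1 p2 * x + roots_prod u1 u2 p1 p2))
    - (x - u1) * (x - u2) * (- fb1 u1 u2 p1 p2 ^ 2 * (x - v1) * (x - v2))); [ring |].
  rewrite <- Hf; ring.
Qed.

Lemma root_on_curve u1 u2 p1 p2 v : quartic u1 u2 p1 p2 v = 0 ->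
  (- v * (fb1 u1 u2 p1 p2 * v + fb0 u1 u2 p1 p2)) ^ 2
  = v ^ 3 + fa u1 u2 p1 p2 * v + fb u1 u2 p1 p2.
Proof. unfold quartic; intro H; lra. Qed.

Lemma fa_fb_through_points a b v1 v2 y1 y2 : v1 <> v2 ->
  y1 ^ 2 = v1 ^ 3 + a * v1 + b -> y2 ^ 2 = v2 ^ 3 + a * v2 + b ->
  fa v1 v2 y1 y2 = a /\ fb v1 v2 y1 y2 = b.
Proof. intros Hne H1 H2; unfold fa, fb; rewrite H1, H2; split; field; lra. Qed.

Inductive axis := U1 | U2 | P1 | P2.

Definition slice {T} (i : axis) (f : R -> R -> R -> R -> T) u1 u2 p1 p2 : R -> T :=
  match i with
  | U1 => fun t => f t u2 p1 p2
  | U2 => fun t => f u1 t p1 p2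
  | P1 => fun t => f u1 u2 t p2
  | P2 => fun t => f u1 u2 p1 t
  end.

Definition axis_coord (i : axis) (u1 u2 p1 p2 : R) : R :=
  match i with U1 => u1 | U2 => u2 | P1 => p1 | P2 => p2 end.

Lemma slice_at_coord {T} i (f : R -> R -> R -> R -> T) u1 u2 p1 p2 :
  slice i f u1 u2 p1 p2 (axis_coord i u1 u2 p1 p2) = f u1 u2 p1 p2.
Proof. now destruct i. Qed.

Definition partial (i : axis) (f : F4) u1 u2 p1 p2 (l : R) : Prop :=
  derivable_pt_lim (slice i f u1 u2 p1 p2) (axis_coord i u1 u2 p1 p2) l.

Lemma has_partials_partial f u1 u2 p1 p2 : has_partials f u1 u2 p1 p2 ->
  forall i, exists l, partial i f u1 u2 p1 p2 l.
Proof. intros (? & ? & ? & ?) []; assumption. Qed.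

Lemma open4_slice (W : Set4) i u1 u2 p1 p2 : open4 W -> W u1 u2 p1 p2 ->
  exists eps, 0 < eps /\
    forall t, Rabs (t - axis_coord i u1 u2 p1 p2) < eps -> slice i W u1 u2 p1 p2 t.
Proof.
  intros HW Hu; destruct (HW _ _ _ _ Hu) as (eps & Heps & Hball).
  exists eps; split; [exact Heps |].
  assert (H0 : forall y, Rabs (y - y) < eps)
    by (intro; rewrite Rminus_diag, Rabs_R0; exact Heps).
  destruct i; intros t Ht; apply Hball; auto.
Qed.

Definition pbr (u1 u2 : R) (df dg : axis -> R) : R :=
  u1 * (df U1 * dg P1 - df P1 * dg U1) + u2 * (df U2 * dg P2 - df P2 * dg U2).

Lemma PB_eq_of_grad (f g h : F4) (W : Set4) (df dg : R -> R -> R -> R -> axis -> R) :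
  (forall u1 u2 p1 p2, W u1 u2 p1 p2 ->
     forall i, partial i f u1 u2 p1 p2 (df u1 u2 p1 p2 i)) ->
  (forall u1 u2 p1 p2, W u1 u2 p1 p2 ->
     forall i, partial i g u1 u2 p1 p2 (dg u1 u2 p1 p2 i)) ->
  (forall u1 u2 p1 p2, W u1 u2 p1 p2 ->
     h u1 u2 p1 p2 = pbr u1 u2 (df u1 u2 p1 p2) (dg u1 u2 p1 p2)) ->
  PB_eq f g h W.
Proof.
  intros Hf Hg Hh u1 u2 p1 p2 Hu.
  pose proof (Hf _ _ _ _ Hu) as F; pose proof (Hg _ _ _ _ Hu) as G.
  split; [| split].
  - repeat split; eexists; [exact (F U1) | exact (F U2) | exact (F P1) | exact (F P2)].
  - repeat split; eexists; [exact (G U1) | exact (G U2) | exact (G P1) | exact (G P2)].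
  - intros f1 f2 f3 f4 g1 g2 g3 g4 F1 F2 F3 F4 G1 G2 G3 G4.
    rewrite (uniqueness_limite _ _ _ _ F1 (F U1)), (uniqueness_limite _ _ _ _ F2 (F U2)),
      (uniqueness_limite _ _ _ _ F3 (F P1)), (uniqueness_limite _ _ _ _ F4 (F P2)),
      (uniqueness_limite _ _ _ _ G1 (G U1)), (uniqueness_limite _ _ _ _ G2 (G U2)),
      (uniqueness_limite _ _ _ _ G3 (G P1)), (uniqueness_limite _ _ _ _ G4 (G P2)).
    exact (Hh _ _ _ _ Hu).
Qed.

Definition grad_u1 (i : axis) : R := match i with U1 => 1 | _ => 0 end.
Definition grad_u2 (i : axis) : R := match i with U2 => 1 | _ => 0 end.

Definition grad_b1 u1 u2 p1 p2 (i : axis) : R :=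
  match i with
  | U1 => - p1 * (2 * u1 - u2) / (u1 ^ 2 * (u1 - u2) ^ 2) + p2 / (u2 * (u1 - u2) ^ 2)
  | U2 => - p2 * (2 * u2 - u1) / (u2 ^ 2 * (u1 - u2) ^ 2) + p1 / (u1 * (u1 - u2) ^ 2)
  | P1 => 1 / (u1 * (u1 - u2))
  | P2 => - 1 / (u2 * (u1 - u2))
  end.

Definition grad_b0 u1 u2 p1 p2 (i : axis) : R :=
  match i with
  | U1 => p1 * u2 * (2 * u1 - u2) / (u1 ^ 2 * (u1 - u2) ^ 2) - p2 / (u1 - u2) ^ 2
  | U2 => p2 * u1 * (2 * u2 - u1) / (u2 ^ 2 * (u1 - u2) ^ 2) - p1 / (u1 - u2) ^ 2
  | P1 => - u2 / (u1 * (u1 - u2))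
  | P2 => u1 / (u2 * (u1 - u2))
  end.

(* Chain rule applied to the expressions of [roots_sum] and [roots_prod] in
   [u1, u2, fb1, fb0]. *)
Definition grad_roots_sum u1 u2 p1 p2 (i : axis) : R :=
  - 2 * grad_b1 u1 u2 p1 p2 i / fb1 u1 u2 p1 p2 ^ 3
  - 2 * grad_b0 u1 u2 p1 p2 i / fb1 u1 u2 p1 p2
  + 2 * fb0 u1 u2 p1 p2 * grad_b1 u1 u2 p1 p2 i / fb1 u1 u2 p1 p2 ^ 2
  - grad_u1 i - grad_u2 i.

Definition grad_roots_prod u1 u2 p1 p2 (i : axis) : R :=
  (2 * u1 + u2) * grad_u1 i + (u1 + 2 * u2) * grad_u2 i
  + 2 * (grad_b0 u1 u2 p1 p2 i * (u1 + u2) + fb0 u1 u2 p1 p2 * (grad_u1 i + grad_u2 i))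
      / fb1 u1 u2 p1 p2
  - 2 * fb0 u1 u2 p1 p2 * (u1 + u2) * grad_b1 u1 u2 p1 p2 i / fb1 u1 u2 p1 p2 ^ 2
  + 2 * fb0 u1 u2 p1 p2 * grad_b0 u1 u2 p1 p2 i / fb1 u1 u2 p1 p2 ^ 2
  - 2 * fb0 u1 u2 p1 p2 ^ 2 * grad_b1 u1 u2 p1 p2 i / fb1 u1 u2 p1 p2 ^ 3
  - (grad_u1 i + grad_u2 i) / fb1 u1 u2 p1 p2 ^ 2
  + 2 * (u1 + u2) * grad_b1 u1 u2 p1 p2 i / fb1 u1 u2 p1 p2 ^ 3.

Ltac partial_by_auto_derive Hd :=
  apply dom_nonzero in Hd as (? & ? & ? & ?);
  unfold partial; cbn [slice axis_coord];
  apply is_derive_Reals; auto_derive;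
  [repeat split; nonzero | field; repeat split; nonzero].

Lemma partial_fb1 i u1 u2 p1 p2 : dom u1 u2 p1 p2 ->
  partial i fb1 u1 u2 p1 p2 (grad_b1 u1 u2 p1 p2 i).
Proof. intro Hd; destruct i; unfold fb1, grad_b1; partial_by_auto_derive Hd. Qed.

Lemma partial_fb0 i u1 u2 p1 p2 : dom u1 u2 p1 p2 ->
  partial i fb0 u1 u2 p1 p2 (grad_b0 u1 u2 p1 p2 i).
Proof. intro Hd; destruct i; unfold fb0, grad_b0; partial_by_auto_derive Hd. Qed.

Lemma partial_roots_sum i u1 u2 p1 p2 : dom u1 u2 p1 p2 ->
  partial i roots_sum u1 u2 p1 p2 (grad_roots_sum u1 u2 p1 p2 i).
Proof.
  intro Hd; destruct i;
    unfold roots_sum, grad_roots_sum, fb1, fb0, grad_b1, grad_b0, grad_u1, grad_u2;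
    partial_by_auto_derive Hd.
Qed.

Lemma partial_roots_prod i u1 u2 p1 p2 : dom u1 u2 p1 p2 ->
  partial i roots_prod u1 u2 p1 p2 (grad_roots_prod u1 u2 p1 p2 i).
Proof.
  intro Hd; destruct i;
    unfold roots_prod, grad_roots_prod, fb1, fb0, grad_b1, grad_b0, grad_u1, grad_u2;
    partial_by_auto_derive Hd.
Qed.

Lemma pbr_generators u1 u2 p1 p2 : dom u1 u2 p1 p2 ->
  let gS := grad_roots_sum u1 u2 p1 p2 in let gP := grad_roots_prod u1 u2 p1 p2 in
  let gB := grad_b1 u1 u2 p1 p2 in let gC := grad_b0 u1 u2 p1 p2 in
  pbr u1 u2 gS gP = 0 /\ pbr u1 u2 gS gB = 0 /\ pbr u1 u2 gS gC = -1 /\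
  pbr u1 u2 gP gB = 1 /\ pbr u1 u2 gP gC = - roots_sum u1 u2 p1 p2 /\
  pbr u1 u2 gB gC = 0.
Proof.
  intros Hd gS gP gB gC; apply dom_nonzero in Hd as (? & ? & ? & ?).
  unfold pbr, gS, gP, gB, gC, grad_roots_sum, grad_roots_prod, grad_b1, grad_b0,
    grad_u1, grad_u2, roots_sum, fb1, fb0.
  repeat split; field; repeat split; nonzero.
Qed.

Definition frame_comb u1 u2 p1 p2 (cS cP cB cC : R) (i : axis) : R :=
  cS * grad_roots_sum u1 u2 p1 p2 i + cP * grad_roots_prod u1 u2 p1 p2 i
  + cB * grad_b1 u1 u2 p1 p2 i + cC * grad_b0 u1 u2 p1 p2 i.

Lemma pbr_comb4 u1 u2 (g1 g2 g3 g4 : axis -> R) a1 a2 a3 a4 c1 c2 c3 c4 :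
  pbr u1 u2 (fun i => a1 * g1 i + a2 * g2 i + a3 * g3 i + a4 * g4 i)
            (fun i => c1 * g1 i + c2 * g2 i + c3 * g3 i + c4 * g4 i)
  = (a1 * c2 - a2 * c1) * pbr u1 u2 g1 g2 + (a1 * c3 - a3 * c1) * pbr u1 u2 g1 g3
  + (a1 * c4 - a4 * c1) * pbr u1 u2 g1 g4 + (a2 * c3 - a3 * c2) * pbr u1 u2 g2 g3
  + (a2 * c4 - a4 * c2) * pbr u1 u2 g2 g4 + (a3 * c4 - a4 * c3) * pbr u1 u2 g3 g4.
Proof. unfold pbr; ring. Qed.

Lemma pbr_frame_comb u1 u2 p1 p2 aS aP aB aC cS cP cB cC : dom u1 u2 p1 p2 ->
  pbr u1 u2 (frame_comb u1 u2 p1 p2 aS aP aB aC) (frame_comb u1 u2 p1 p2 cS cP cB cC)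
  = (aP * cB - aB * cP) - (aS * cC - aC * cS)
    - roots_sum u1 u2 p1 p2 * (aP * cC - aC * cP).
Proof.
  intro Hd; unfold frame_comb; rewrite pbr_comb4.
  destruct (pbr_generators _ _ _ _ Hd) as (-> & -> & -> & -> & -> & ->); ring.
Qed.

Lemma derivable_pt_lim_vieta_root (v w s q : R -> R) x eps dv dw ds dq :
  0 < eps ->
  (forall t, Rabs (t - x) < eps -> v t + w t = s t /\ v t * w t = q t) ->
  v x <> w x ->
  derivable_pt_lim v x dv -> derivable_pt_lim w x dw ->
  derivable_pt_lim s x ds -> derivable_pt_lim q x dq ->
  dv = (v x * ds - dq) / (v x - w x).
Proof.
  intros Heps Hnear Hne Hv Hw Hs Hq.
  assert (Hnear' : forall t, x - eps < t < x + eps ->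
                     v t + w t = s t /\ v t * w t = q t)
    by (intros t Ht; apply Hnear, Rabs_def1; lra).
  assert (Hx : x - eps < x < x + eps) by lra.
  assert (Hsum : dv + dw = ds).
  { apply (uniqueness_limite s x); [| exact Hs].
    apply (derivable_pt_lim_locally_ext (fun t => v t + w t) s x (x - eps) (x + eps));
      [exact Hx | apply Hnear' | exact (derivable_pt_lim_plus v w x dv dw Hv Hw)]. }
  assert (Hprod : dv * w x + v x * dw = dq).
  { apply (uniqueness_limite q x); [| exact Hq].
    apply (derivable_pt_lim_locally_ext (fun t => v t * w t) q x (x - eps) (x + eps));
      [exact Hx | apply Hnear' | exact (derivable_pt_lim_mult v w x dv dw Hv Hw)]. }
  rewrite <- Hsum, <- Hprod; field; lra.
Qed.

Lemma derivable_pt_lim_pv (v b c : R -> R) x dv db dc :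
  derivable_pt_lim v x dv -> derivable_pt_lim b x db -> derivable_pt_lim c x dc ->
  derivable_pt_lim (fun t => - v t * (b t * v t + c t)) x
    (- (2 * b x * v x + c x) * dv - v x ^ 2 * db - v x * dc).
Proof.
  intros Hv Hb Hc.
  replace (- (2 * b x * v x + c x) * dv - v x ^ 2 * db - v x * dc)
    with (- dv * (b x * v x + c x) + - v x * (db * v x + b x * dv + dc)) by ring.
  apply (derivable_pt_lim_mult (fun t => - v t) (fun t => b t * v t + c t));
    [apply (derivable_pt_lim_opp v) |
     apply (derivable_pt_lim_plus (fun t => b t * v t) c);
       [apply (derivable_pt_lim_mult b v) |]]; assumption.
Qed.

Definition root_pair_on (W : Set4) (v w : F4) : Prop :=
  open4 W /\ forall u1 u2 p1 p2, W u1 u2 p1 p2 ->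
    dom u1 u2 p1 p2 /\ v u1 u2 p1 p2 <> w u1 u2 p1 p2 /\
    v u1 u2 p1 p2 + w u1 u2 p1 p2 = roots_sum u1 u2 p1 p2 /\
    v u1 u2 p1 p2 * w u1 u2 p1 p2 = roots_prod u1 u2 p1 p2 /\
    has_partials v u1 u2 p1 p2 /\ has_partials w u1 u2 p1 p2.

Lemma root_pair_on_sym W v w : root_pair_on W v w -> root_pair_on W w v.
Proof.
  intros [Hopen Hpair]; split; [exact Hopen |].
  intros u1 u2 p1 p2 Hu; destruct (Hpair _ _ _ _ Hu) as (Hd & Hne & Hs & Hp & Hv & Hw).
  refine (conj Hd (conj _ (conj _ (conj _ (conj Hw Hv))))).
  - intro Heq; apply Hne; symmetry; exact Heq.
  - rewrite Rplus_comm; exact Hs.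
  - rewrite Rmult_comm; exact Hp.
Qed.

Definition pv (v : F4) : F4 := fun u1 u2 p1 p2 =>
  - v u1 u2 p1 p2 * (fb1 u1 u2 p1 p2 * v u1 u2 p1 p2 + fb0 u1 u2 p1 p2).

Definition grad_root (v w : F4) u1 u2 p1 p2 : axis -> R :=
  frame_comb u1 u2 p1 p2
    (v u1 u2 p1 p2 / (v u1 u2 p1 p2 - w u1 u2 p1 p2))
    (- 1 / (v u1 u2 p1 p2 - w u1 u2 p1 p2)) 0 0.

Definition grad_pv (v w : F4) u1 u2 p1 p2 : axis -> R :=
  frame_comb u1 u2 p1 p2
    (- (2 * fb1 u1 u2 p1 p2 * v u1 u2 p1 p2 + fb0 u1 u2 p1 p2)
       * v u1 u2 p1 p2 / (v u1 u2 p1 p2 - w u1 u2 p1 p2))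
    ((2 * fb1 u1 u2 p1 p2 * v u1 u2 p1 p2 + fb0 u1 u2 p1 p2)
       / (v u1 u2 p1 p2 - w u1 u2 p1 p2))
    (- v u1 u2 p1 p2 ^ 2) (- v u1 u2 p1 p2).

Section RootPair.

Variables (W : Set4) (v w : F4).
Hypothesis Hvw : root_pair_on W v w.

Lemma partial_root u1 u2 p1 p2 : W u1 u2 p1 p2 ->
  forall i, partial i v u1 u2 p1 p2 (grad_root v w u1 u2 p1 p2 i).
Proof.
  intros Hu i; destruct Hvw as [Hopen Hpair].
  destruct (Hpair _ _ _ _ Hu) as (Hd & Hne & _ & _ & Hv & Hw).
  destruct (has_partials_partial _ _ _ _ _ Hv i) as [dv Hdv].
  destruct (has_partials_partial _ _ _ _ _ Hw i) as [dw Hdw].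
  destruct (open4_slice W i _ _ _ _ Hopen Hu) as (eps & Heps & Hnear).
  assert (Hroots : forall t, Rabs (t - axis_coord i u1 u2 p1 p2) < eps ->
    slice i v u1 u2 p1 p2 t + slice i w u1 u2 p1 p2 t = slice i roots_sum u1 u2 p1 p2 t /\
    slice i v u1 u2 p1 p2 t * slice i w u1 u2 p1 p2 t = slice i roots_prod u1 u2 p1 p2 t).
  { intros t Ht; specialize (Hnear t Ht); destruct i; apply Hpair in Hnear; tauto. }
  assert (Hne' : slice i v u1 u2 p1 p2 (axis_coord i u1 u2 p1 p2)
                 <> slice i w u1 u2 p1 p2 (axis_coord i u1 u2 p1 p2))
    by (rewrite !slice_at_coord; exact Hne).
  pose proof (derivable_pt_lim_vieta_root _ _ _ _ _ _ _ _ _ _ Heps Hroots Hne'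
    Hdv Hdw (partial_roots_sum i _ _ _ _ Hd) (partial_roots_prod i _ _ _ _ Hd)) as Hdv_eq.
  rewrite !slice_at_coord in Hdv_eq.
  replace (grad_root v w u1 u2 p1 p2 i) with dv; [exact Hdv |].
  rewrite Hdv_eq; unfold grad_root, frame_comb.
  field; intro H0; apply Hne; lra.
Qed.

Lemma partial_pv u1 u2 p1 p2 : W u1 u2 p1 p2 ->
  forall i, partial i (pv v) u1 u2 p1 p2 (grad_pv v w u1 u2 p1 p2 i).
Proof.
  intros Hu i; destruct Hvw as [_ Hpair].
  destruct (Hpair _ _ _ _ Hu) as (Hd & Hne & _).
  assert (Hslice : slice i (pv v) u1 u2 p1 p2 = fun t =>
    - slice i v u1 u2 p1 p2 t *
      (slice i fb1 u1 u2 p1 p2 t * slice i v u1 u2 p1 p2 t + slice i fb0 u1 u2 p1 p2 t))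
    by now destruct i.
  unfold partial; rewrite Hslice.
  replace (grad_pv v w u1 u2 p1 p2 i) with
    (- (2 * slice i fb1 u1 u2 p1 p2 (axis_coord i u1 u2 p1 p2)
           * slice i v u1 u2 p1 p2 (axis_coord i u1 u2 p1 p2)
         + slice i fb0 u1 u2 p1 p2 (axis_coord i u1 u2 p1 p2))
       * grad_root v w u1 u2 p1 p2 i
     - slice i v u1 u2 p1 p2 (axis_coord i u1 u2 p1 p2) ^ 2 * grad_b1 u1 u2 p1 p2 i
     - slice i v u1 u2 p1 p2 (axis_coord i u1 u2 p1 p2) * grad_b0 u1 u2 p1 p2 i).
  - apply derivable_pt_lim_pv;
      [apply partial_root | apply partial_fb1 | apply partial_fb0]; assumption.
  - rewrite !slice_at_coord; unfold grad_pv, grad_root, frame_comb.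
    field; intro H0; apply Hne; lra.
Qed.

End RootPair.

Lemma PB_root_pair W v w : root_pair_on W v w ->
  PB_eq v w czero W /\ PB_eq (pv v) (pv w) czero W /\
  PB_eq v (pv v) v W /\ PB_eq v (pv w) czero W.
Proof.
  intro Hvw; pose proof (root_pair_on_sym _ _ _ Hvw) as Hwv.
  pose proof (partial_root _ _ _ Hvw) as Gv; pose proof (partial_root _ _ _ Hwv) as Gw.
  pose proof (partial_pv _ _ _ Hvw) as Gpv; pose proof (partial_pv _ _ _ Hwv) as Gpw.
  destruct Hvw as [_ Hpair].
  split; [| split; [| split]];
    [ apply (PB_eq_of_grad _ _ _ _ _ _ Gv Gw) | apply (PB_eq_of_grad _ _ _ _ _ _ Gpv Gpw)
    | apply (PB_eq_of_grad _ _ _ _ _ _ Gv Gpv) | apply (PB_eq_of_grad _ _ _ _ _ _ Gv Gpw) ];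
    intros u1 u2 p1 p2 Hu.
  all: destruct (Hpair _ _ _ _ Hu) as (Hd & Hne & Hsum & _).
  all: unfold grad_root, grad_pv, czero; rewrite pbr_frame_comb, <- Hsum by exact Hd.
  all: field; repeat split; intro H0; apply Hne; lra.
Qed.

Theorem proposition4 :
  (forall u1 u2 p1 p2, dom u1 u2 p1 p2 ->
     exists c2 c1 c0, forall x,
       quartic u1 u2 p1 p2 x = (x - u1) * (x - u2) * (c2 * x ^ 2 + c1 * x + c0)) /\
  (forall (W : Set4) (v1 v2 : F4),
     open4 W ->
     (forall u1 u2 p1 p2, W u1 u2 p1 p2 -> dom u1 u2 p1 p2) ->
     (forall u1 u2 p1 p2, W u1 u2 p1 p2 ->
        v1 u1 u2 p1 p2 <> v2 u1 u2 p1 p2 /\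
        forall x, quartic u1 u2 p1 p2 x =
          (x - u1) * (x - u2) *
          (- (fb1 u1 u2 p1 p2) ^ 2 * (x - v1 u1 u2 p1 p2) * (x - v2 u1 u2 p1 p2))) ->
     continuous_on4 v1 W -> continuous_on4 v2 W ->
     (forall u1 u2 p1 p2, W u1 u2 p1 p2 ->
        has_partials v1 u1 u2 p1 p2 /\ has_partials v2 u1 u2 p1 p2) ->
     let pv1 : F4 := fun u1 u2 p1 p2 =>
       - v1 u1 u2 p1 p2 * (fb1 u1 u2 p1 p2 * v1 u1 u2 p1 p2 + fb0 u1 u2 p1 p2) in
     let pv2 : F4 := fun u1 u2 p1 p2 =>
       - v2 u1 u2 p1 p2 * (fb1 u1 u2 p1 p2 * v2 u1 u2 p1 p2 + fb0 u1 u2 p1 p2) in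
     (forall u1 u2 p1 p2, W u1 u2 p1 p2 ->
        fa (v1 u1 u2 p1 p2) (v2 u1 u2 p1 p2) (pv1 u1 u2 p1 p2) (pv2 u1 u2 p1 p2)
          = fa u1 u2 p1 p2 /\
        fb (v1 u1 u2 p1 p2) (v2 u1 u2 p1 p2) (pv1 u1 u2 p1 p2) (pv2 u1 u2 p1 p2)
          = fb u1 u2 p1 p2) /\
     PB_eq v1 v2 czero W /\
     PB_eq pv1 pv2 czero W /\
     PB_eq v1 pv1 v1 W /\
     PB_eq v2 pv2 v2 W /\
     PB_eq v1 pv2 czero W /\
     PB_eq v2 pv1 czero W).
Proof.
  split.
  { intros u1 u2 p1 p2 Hd.
    exists (- fb1 u1 u2 p1 p2 ^ 2), (fb1 u1 u2 p1 p2 ^ 2 * roots_sum u1 u2 p1 p2),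
      (- fb1 u1 u2 p1 p2 ^ 2 * roots_prod u1 u2 p1 p2).
    intro x; rewrite quartic_factor by exact Hd; ring. }
  intros W v1 v2 Hopen Hdom Hroots _ _ Hpart pv1 pv2.
  assert (Hpair : root_pair_on W v1 v2).
  { split; [exact Hopen |]; intros u1 u2 p1 p2 Hu.
    pose proof (Hdom _ _ _ _ Hu) as Hd; destruct (Hroots _ _ _ _ Hu) as [Hne Hq].
    destruct (roots_vieta _ _ _ _ _ _ Hd Hq) as [Hsum Hprod].
    destruct (Hpart _ _ _ _ Hu) as [Hv1 Hv2].
    exact (conj Hd (conj Hne (conj Hsum (conj Hprod (conj Hv1 Hv2))))). }
  destruct (PB_root_pair _ _ _ Hpair) as (H12 & Hp12 & H11 & H1p2).
  destruct (PB_root_pair _ _ _ (root_pair_on_sym _ _ _ Hpair)) as (_ & _ & H22 & H2p1).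
  refine (conj _ (conj H12 (conj Hp12 (conj H11 (conj H22 (conj H1p2 H2p1)))))).
  intros u1 u2 p1 p2 Hu; destruct (Hroots _ _ _ _ Hu) as [Hne Hq].
  apply fa_fb_through_points; [exact Hne | |];
    apply root_on_curve; rewrite Hq; ring.
Qed.
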